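(* Fix $\lambda_t\in\mathbb{R}^m_+$ and $h\in[0,1)$. For each deterministic policy $\pi$ define $\mathcal{T}^\pi_1:\mathbb{R}^{\mathcal{S}}\to\mathbb{R}^{\mathcal{S}}$ by $$[\mathcal{T}_1^\pi v](s) = [\mathcal{T}^\pi v](s) - \gamma h\langle P^o_{s,\pi(s)}, v - V^\pi_r + \lambda_t^\top V^\pi_g\rangle,$$ where $\mathcal{T}^\pi$ is the operator defined below. Then: (1) (Monotonicity) if $v_1\ge v_2$ componentwise then $\mathcal{T}_1^\pi v_1\ge\mathcal{T}_1^\pi v_2$; (2) (Transition invariance) for every $c\in\mathbb{R}$, $\mathcal{T}_1^\pi(v+c\mathbf{1}) = \mathcal{T}_1^\pi v + \gamma(1-h)c\mathbf{1}$; (3) (Contraction) $\mathcal{T}_1^\pi$ is a $\gamma(1-h)$-contraction in $\|\cdot\|_\infty$, and $V^\pi_r - \lambda_t^\top V^\pi_g$ is its unique fixed point.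
   Context: $\mathcal{S},\mathcal{A}$ finite, $\gamma\in[0,1)$. $P^o$ is a nominal kernel and $\mathcal{P}=\otimes_{(s,a)}\mathcal{P}_{s,a}$ an $(s,a)$-rectangular uncertainty set, $\mathcal{P}_{s,a}=\{P\in\Delta(\mathcal{S}):D(P,P^o_{s,a})\le\beta_{s,a}\}$ (minima over these sets taken to be attained). $r:\mathcal{S}\times\mathcal{A}\to[0,\bar R]$, $g=(g_1,\dots,g_m)$ with $g_i:\mathcal{S}\times\mathcal{A}\to[0,\tau_i]$. Policies $\pi:\mathcal{S}\to\mathcal{A}$ are deterministic and stationary. Robust values: $V^\pi_u(s)=\min_{\mathcal{K}\in\otimes_{t\ge0}\mathcal{P}}\mathbb{E}_{\mathcal{K}}[\sum_{t\ge0}\gamma^tu(s_t,a_t)\mid s_0=s,\pi]$ (worst case over sequences of kernels from $\mathcal{P}$), $V^\pi_g=(V^\pi_{g_i})_i$. The operator $\mathcal{T}^\pi$ is $[\mathcal{T}^{\pi} v](s) = (r - \lambda_t^{\top}g)(s, \pi(s)) + \gamma \langle P^o_{s, \pi(s)}, v \rangle + \gamma \min_{P_{s,\pi(s)} \in \mathcal{P}_{s,\pi(s)}} \langle P_{s, \pi(s)} - P^o_{s, \pi(s)}, V^{\pi}_{r} \rangle - \gamma \lambda_t^{\top} \min_{P_{s,\pi(s)} \in \mathcal{P}_{s,\pi(s)}} \langle P_{s, \pi(s)} - P^o_{s, \pi(s)}, V^{\pi}_{g} \rangle$, with the last minimum taken componentwise over the $g_i$ and with $V^\pi_r,V^\pi_g$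 fixed (independent of $v$). *)

From HB Require Import structures.
From mathcomp Require Import all_boot all_order all_algebra.
From mathcomp Require Import all_classical all_reals all_analysis.
Set Implicit Arguments. Unset Strict Implicit. Unset Printing Implicit Defensive.
Import Order.TTheory GRing.Theory Num.Theory.
Local Open Scope classical_set_scope.
Local Open Scope ring_scope.

Section RMDP.
Variables (R : realType) (S A : finType).

Definition is_dist (p : S -> R) : Prop :=
  (forall s, 0 <= p s) /\ \sum_(s : S) p s = 1.

Definition ip (p w : S -> R) : R := \sum_(s : S) p s * w s.

Definition unc_set (D : (S -> R) -> (S -> R) -> R) (beta : S -> A -> R)
  (Po : S -> A -> S -> R) (s : S) (a : A) : set (S -> R) :=
  [set p | is_dist p /\ D p (Po s a) <= beta s a].

(* a kernel K belongs to the rectangular set P = (x)_{(s,a)} P_{s,a} *)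
Definition kernel_in D beta Po (K : S -> A -> S -> R) : Prop :=
  forall s a, unc_set D beta Po s a (K s a).

Fixpoint state_dist (Ks : nat -> S -> A -> S -> R) (pi : S -> A) (s0 : S)
  (t : nat) : S -> R :=
  match t with
  | 0 => fun s => if s == s0 then 1 else 0
  | t'.+1 => fun s' =>
      \sum_(s : S) state_dist Ks pi s0 t' s * Ks t' s (pi s) s'
  end.

Definition disc_return (gamma : R) (Ks : nat -> S -> A -> S -> R)
  (pi : S -> A) (u : S -> A -> R) (s0 : S) : R :=
  limn (fun n => \sum_(0 <= t < n)
          (gamma ^+ t * \sum_(s : S) state_dist Ks pi s0 t s * u s (pi s))).

Definition robust_value D beta Po (gamma : R) (pi : S -> A) (u : S -> A -> R)
  (s0 : S) : R :=
  inf [set disc_return gamma Ks pi u s0 |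
       Ks in [set Ks | forall t, kernel_in D beta Po (Ks t)]].

Definition min_dev D beta Po (s : S) (a : A) (w : S -> R) : R :=
  inf [set ip (fun s' => p s' - Po s a s') w | p in unc_set D beta Po s a].

Definition Top D beta Po (gamma : R) (m : nat) (r : S -> A -> R)
  (g : 'I_m -> S -> A -> R) (lam : 'I_m -> R) (pi : S -> A) (v : S -> R)
  (s : S) : R :=
  (r s (pi s) - \sum_(i < m) lam i * g i s (pi s))
  + gamma * ip (Po s (pi s)) v
  + gamma * min_dev D beta Po s (pi s) (robust_value D beta Po gamma pi r)
  - gamma * \sum_(i < m) lam i *
      min_dev D beta Po s (pi s) (robust_value D beta Po gamma pi (g i)).

Definition T1op D beta Po (gamma : R) (m : nat) (r : S -> A -> R)
  (g : 'I_m -> S -> A -> R) (lam : 'I_m -> R) (h : R) (pi : S -> A)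
  (v : S -> R) (s : S) : R :=
  Top D beta Po gamma r g lam pi v s
  - gamma * h * ip (Po s (pi s))
      (fun s' => v s' - robust_value D beta Po gamma pi r s'
                 + \sum_(i < m) lam i * robust_value D beta Po gamma pi (g i) s').

Definition supnorm (v : S -> R) : R := \big[Num.max/0]_(s : S) `|v s|.

End RMDP.

From HB Require Import structures.
From mathcomp Require Import all_boot all_order all_algebra.
From mathcomp Require Import all_classical all_reals all_analysis.
From mathcomp Require Import ring lra.
Import Order.TTheory GRing.Theory Num.Theory.
Import numFieldNormedType.Exports.
Set Implicit Arguments. Unset Strict Implicit. Unset Printing Implicit Defensive.
Local Open Scope classical_set_scope.
Local Open Scope ring_scope.

(* T_1^pi v = T_1^pi 0 + gamma (1 - h) P^o_pi v is affine with a stochastic linear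
   part, which gives monotonicity, translation and the gamma (1 - h)-contraction at
   once; uniqueness of the fixed point follows from the contraction.
   For the fixed point, each robust value satisfies the robust Bellman equation
   V_u(s) = u(s, pi s) + gamma min_{P in P_{s,pi s}} <P, V_u>.  The Bellman operator
   has a fixed point W, the increasing limit of value iteration from 0.  Telescoping
   the discounted return against W shows that every admissible kernel sequence earns
   at least W, and the stationary kernel of minimisers for W earns exactly W, so
   V_u = W.  Substituting these equations for r and the g_i into T^pi shows that
   V_r - lambda^T V_g is fixed. *)

Lemma inf_attained (R : realType) (E : set R) x : E x -> lbound E x -> inf E = x.
Proof.
move=> Ex lbx; apply/le_anti/andP; split; first by apply: ge_inf => //; exists x.
by apply: lb_le_inf => //; exists x.
Qed.

Section InnerProduct.
Variables (R : realType) (S : finType).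
Implicit Types (p q v w : S -> R) (c : R).

Lemma ipD p v w : ip p (fun s => v s + w s) = ip p v + ip p w.
Proof. by rewrite /ip -big_split /=; apply: eq_bigr => s _; rewrite mulrDr. Qed.

Lemma ipN p v : ip p (fun s => - v s) = - ip p v.
Proof. by rewrite /ip -sumrN; apply: eq_bigr => s _; rewrite mulrN. Qed.

Lemma ipB p v w : ip p (fun s => v s - w s) = ip p v - ip p w.
Proof. by rewrite ipD ipN. Qed.

Lemma ipZ p c v : ip p (fun s => c * v s) = c * ip p v.
Proof. by rewrite /ip mulr_sumr; apply: eq_bigr => s _; rewrite mulrCA. Qed.

Lemma ip0 p : ip p (fun=> 0) = 0.
Proof. by rewrite /ip big1 // => s _; rewrite mulr0. Qed.

Lemma ip_lincomb m p (lam : 'I_m -> R) (f : 'I_m -> S -> R) :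
  ip p (fun s => \sum_(i < m) lam i * f i s) = \sum_(i < m) lam i * ip p (f i).
Proof.
rewrite /ip; under eq_bigr do rewrite mulr_sumr.
rewrite exchange_big /=; apply: eq_bigr => i _.
by rewrite mulr_sumr; apply: eq_bigr => s _; rewrite mulrCA.
Qed.

Lemma ipBl p q w : ip (fun s => p s - q s) w = ip p w - ip q w.
Proof. by rewrite /ip -sumrB; apply: eq_bigr => s _; rewrite mulrBl. Qed.

Lemma ip_ge0 p v : (forall s, 0 <= p s) -> (forall s, 0 <= v s) -> 0 <= ip p v.
Proof. by move=> p_ge0 v_ge0; apply: sumr_ge0 => s _; apply: mulr_ge0. Qed.

Lemma ler_ip p v w :
  (forall s, 0 <= p s) -> (forall s, v s <= w s) -> ip p v <= ip p w.
Proof. by move=> p_ge0 le_vw; apply: ler_sum => s _; apply: ler_wpM2l. Qed.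

Lemma ip_cst p c : is_dist p -> ip p (fun=> c) = c.
Proof. by case=> _ p_sum1; rewrite /ip -mulr_suml p_sum1 mul1r. Qed.

Lemma supnorm_ge0 v : 0 <= supnorm v.
Proof. by rewrite /supnorm; elim/big_ind: _ => // x y x_ge0 y_ge0; rewrite le_max x_ge0. Qed.

Lemma ler_norm_supnorm v s : `|v s| <= supnorm v.
Proof. exact: (le_bigmax _ (fun s => `|v s|) s). Qed.

Lemma ler_supnorm v s : v s <= supnorm v.
Proof. exact: le_trans (ler_norm _) (ler_norm_supnorm v s). Qed.

Lemma norm_ip_dist_le p v : is_dist p -> `|ip p v| <= supnorm v.
Proof.
move=> p_dist; rewrite -(ip_cst (supnorm v) p_dist).
apply: le_trans (ler_norm_sum _ _ _) _; apply: ler_sum => s _.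
by rewrite normrM ger0_norm ?(p_dist.1 s) // ler_wpM2l ?(p_dist.1 s) ?ler_norm_supnorm.
Qed.

Lemma ip_dist_le_supnorm p v : is_dist p -> ip p v <= supnorm v.
Proof. by move=> p_dist; apply: le_trans (ler_norm _) (norm_ip_dist_le v p_dist). Qed.

End InnerProduct.

Section StateDistribution.
Variables (R : realType) (S A : finType).
Variables (Ks : nat -> S -> A -> S -> R) (pi : S -> A) (s0 : S).

Lemma ip_state_dist0 w : ip (state_dist Ks pi s0 0) w = w s0.
Proof.
rewrite /ip /=; under eq_bigr do rewrite (fun_if (fun x => x * w _)) mul1r mul0r.
by rewrite -big_mkcond /= big_pred1_eq.
Qed.

Lemma ip_state_distS t w :
  ip (state_dist Ks pi s0 t.+1) w =
  ip (state_dist Ks pi s0 t) (fun s => ip (Ks t s (pi s)) w).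
Proof.
rewrite /ip /=; under eq_bigr do rewrite mulr_suml.
rewrite exchange_big /=; apply: eq_bigr => s _; rewrite mulr_sumr.
by apply: eq_bigr => s' _; rewrite mulrA.
Qed.

Hypothesis Ks_dist : forall t s a, is_dist (Ks t s a).

Lemma state_dist_dist t : is_dist (state_dist Ks pi s0 t).
Proof.
elim: t => [|t [ge0 sum1]] /=.
  split; first by move=> s; case: (s == s0).
  by rewrite -big_mkcond /= big_pred1_eq.
split=> [s'|]; first by apply: sumr_ge0 => s _; rewrite mulr_ge0 ?ge0 ?(Ks_dist _ _ _).1.
rewrite exchange_big /= -[RHS]sum1; apply: eq_bigr => s _.
by rewrite -mulr_sumr (Ks_dist t s (pi s)).2 mulr1.
Qed.

End StateDistribution.

Definition partial_return (R : realType) (S A : finType) (gamma : R)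
    (Ks : nat -> S -> A -> S -> R) (pi : S -> A) (u : S -> R) (s0 : S) (n : nat) : R :=
  \sum_(0 <= t < n) gamma ^+ t * ip (state_dist Ks pi s0 t) u.

Lemma disc_returnE (R : realType) (S A : finType) (gamma : R) Ks (pi : S -> A)
    (u0 : S -> A -> R) s0 :
  disc_return gamma Ks pi u0 s0 = limn (partial_return gamma Ks pi (fun s => u0 s (pi s)) s0).
Proof. by []. Qed.

Section DiscountedReturn.
Variables (R : realType) (S A : finType) (gamma : R).
Hypotheses (gamma_ge0 : 0 <= gamma) (gamma_lt1 : gamma < 1).
Variables (Ks : nat -> S -> A -> S -> R) (pi : S -> A) (u : S -> R) (s0 : S).

Lemma partial_return_telescope (W : S -> R) n :
  partial_return gamma Ks pi u s0 n + gamma ^+ n * ip (state_dist Ks pi s0 n) W - W s0 =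
  \sum_(0 <= t < n) gamma ^+ t * ip (state_dist Ks pi s0 t)
       (fun s => u s + gamma * ip (Ks t s (pi s)) W - W s).
Proof.
rewrite /partial_return; elim: n => [|n IH].
  by rewrite !big_geq // expr0 mul1r ip_state_dist0 add0r subrr.
by rewrite !big_nat_recr //= -IH ip_state_distS exprSr ipB ipD ipZ; ring.
Qed.

Hypotheses (u_ge0 : forall s, 0 <= u s) (Ks_dist : forall t s a, is_dist (Ks t s a)).

Lemma partial_return_homo :
  {homo partial_return gamma Ks pi u s0 : n m / (n <= m)%N >-> n <= m}.
Proof.
apply/nondecreasing_seqP => n; rewrite /partial_return big_nat_recr //= lerDl.
rewrite mulr_ge0 ?exprn_ge0 // ip_ge0 //.
exact: (state_dist_dist pi s0 Ks_dist n).1.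
Qed.

Lemma partial_return_le n :
  partial_return gamma Ks pi u s0 n <= supnorm u / (1 - gamma).
Proof.
have supu_ge0 := supnorm_ge0 u.
have geom : supnorm u + gamma * (supnorm u / (1 - gamma)) = supnorm u / (1 - gamma).
  by field; rewrite subr_eq0 gt_eqF.
apply: (@le_trans _ _ (\sum_(0 <= t < n) gamma ^+ t * supnorm u)).
  apply: ler_sum => t _; rewrite ler_wpM2l ?exprn_ge0 //.
  exact/ip_dist_le_supnorm/state_dist_dist.
elim: n => [|n IH]; first by rewrite big_geq // divr_ge0 // subr_ge0 ltW.
rewrite big_nat_recl // expr0 mul1r -[X in _ <= X]geom lerD2l.
under eq_bigr do rewrite exprS -mulrA.
by rewrite -mulr_sumr ler_wpM2l.
Qed.

Lemma partial_return_cvg : cvgn (partial_return gamma Ks pi u s0).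
Proof.
apply/cvg_ex; exists (sup (range (partial_return gamma Ks pi u s0))).
apply: nondecreasing_cvgn; first exact: partial_return_homo.
by exists (supnorm u / (1 - gamma)) => _ [n _ <-]; exact: partial_return_le.
Qed.

End DiscountedReturn.

Lemma ler_limn_geometric_tail (R : realType) (J : nat -> R) (gamma C x : R) :
  0 <= gamma -> gamma < 1 -> cvgn J ->
  (forall n, x <= J n + gamma ^+ n * C) -> x <= limn J.
Proof.
move=> gamma_ge0 gamma_lt1 J_cvg x_le.
have tail_cvg : (fun n => J n + gamma ^+ n * C) @ \oo --> limn J + 0 * C.
  by apply: cvgD => //; apply: cvgMr_tmp; apply: cvg_expr; rewrite ger0_norm.
rewrite -[limn J]addr0 -(mul0r C) -(cvg_lim _ tail_cvg) //.
by apply: limr_ge; [exact: cvgP tail_cvg | near=> n; exact: x_le].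
Unshelve. all: by end_near.
Qed.

Section RobustBellman.
Variables (R : realType) (S A : finType).
Variables (D : (S -> R) -> (S -> R) -> R) (beta : S -> A -> R) (Po : S -> A -> S -> R).
Variables (gamma : R) (pi : S -> A) (u0 : S -> A -> R).
Hypotheses (gamma_ge0 : 0 <= gamma) (gamma_lt1 : gamma < 1).
Hypothesis u0_ge0 : forall s a, 0 <= u0 s a.
Variable worst : S -> A -> (S -> R) -> S -> R.
Hypothesis worst_in : forall s a w, unc_set D beta Po s a (worst s a w).
Hypothesis worst_min :
  forall s a w q, unc_set D beta Po s a q -> ip (worst s a w) w <= ip q w.

Implicit Types (w : S -> R) (Ks : nat -> S -> A -> S -> R).

Let u s := u0 s (pi s).
Let bellman w s := u s + gamma * ip (worst s (pi s) w) w.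

Lemma worst_dist s a w : is_dist (worst s a w).
Proof. by case: (worst_in s a w). Qed.

Lemma admissible_dist Ks :
  (forall t, kernel_in D beta Po (Ks t)) -> forall t s a, is_dist (Ks t s a).
Proof. by move=> Ks_in t s a; case: (Ks_in t s a). Qed.

Lemma bellman_shift w1 w2 d s :
  (forall s', w2 s' <= w1 s' + d) -> bellman w2 s <= bellman w1 s + gamma * d.
Proof.
move=> le_w; rewrite /bellman -addrA lerD2l -mulrDr ler_wpM2l //.
apply: le_trans (worst_min w2 (worst_in s (pi s) w1)) _.
rewrite -(ip_cst d (worst_dist s (pi s) w1)) -ipD.
exact: ler_ip (worst_dist _ _ _).1 le_w.
Qed.

Lemma bellman_homo w1 w2 s : (forall s', w1 s' <= w2 s') -> bellman w1 s <= bellman w2 s.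
Proof.
move=> le_w; have := @bellman_shift w2 w1 0 s; rewrite mulr0 addr0; apply.
by move=> s'; rewrite addr0.
Qed.

Lemma bellman_ge0 w s : (forall s', 0 <= w s') -> 0 <= bellman w s.
Proof.
move=> w_ge0; rewrite addr_ge0 ?u0_ge0 // mulr_ge0 // ip_ge0 //.
exact: (worst_dist _ _ _).1.
Qed.

Let vi n := iter n bellman (fun=> 0).

Lemma vi_ge0 n s : 0 <= vi n s.
Proof. by elim: n s => [|n IH] s //=; exact: bellman_ge0. Qed.

(* [K] solves [K = sup u + gamma K], so it bounds every iterate. *)
Let K := supnorm u / (1 - gamma).

Lemma vi_le n s : vi n s <= K.
Proof.
have K_fix : supnorm u + gamma * K = K by rewrite /K; field; rewrite subr_eq0 gt_eqF.
elim: n s => [|n IH] s /=; first by rewrite divr_ge0 ?supnorm_ge0 // subr_ge0 ltW.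
rewrite -K_fix lerD ?ler_supnorm // ler_wpM2l //.
rewrite -(ip_cst K (worst_dist s (pi s) (vi n))).
exact: ler_ip (worst_dist _ _ _).1 IH.
Qed.

Lemma vi_homo s : {homo vi^~ s : n m / (n <= m)%N >-> n <= m}.
Proof.
apply/nondecreasing_seqP => n; elim: n s => [|n IH] s; first exact: vi_ge0.
exact: bellman_homo.
Qed.

Lemma vi_cvg s : cvgn (vi^~ s).
Proof.
apply/cvg_ex; exists (sup (range (vi^~ s))).
apply: nondecreasing_cvgn; first exact: vi_homo.
by exists K => _ [n _ <-]; exact: vi_le.
Qed.

Let W s := limn (vi^~ s).

Lemma vi_le_W n s : vi n s <= W s.
Proof. exact/nondecreasing_cvgn_le/vi_cvg/vi_homo. Qed.

Lemma W_ge0 s : 0 <= W s.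
Proof. exact: le_trans (vi_le_W 0 s). Qed.

Lemma W_le_bellman s : W s <= bellman W s.
Proof.
apply: limr_le; first exact: vi_cvg.
apply: nearW => -[|n] /=; first exact/bellman_ge0/W_ge0.
by apply: bellman_homo => s'; exact: vi_le_W.
Qed.

(* [W] is within the total gap [sum (W - vi n)] of [vi n], and that gap vanishes. *)
Lemma bellman_le_W s : bellman W s <= W s.
Proof.
pose gap n := \sum_s' (W s' - vi n s').
have gap_cvg : gap n @[n --> \oo] --> 0.
  have -> : 0 = \sum_(s' : S) (W s' - W s') by rewrite big1 // => s' _; rewrite subrr.
  apply: cvg_big => // [|s' _]; first exact: add_continuous.
  by apply: cvgB; [exact: cvg_cst | exact: vi_cvg].
have viS_cvg : vi n.+1 s @[n --> \oo] --> W s by rewrite (cvg_shiftS (vi^~ s)); exact: vi_cvg.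
have bound_cvg : vi n.+1 s + gamma * gap n @[n --> \oo] --> W s + gamma * 0.
  by apply: cvgD => //; apply: cvgMl_tmp.
rewrite -[W s]addr0 -(mulr0 gamma) -(cvg_lim _ bound_cvg) //.
apply: limr_ge; first exact: cvgP bound_cvg.
near=> n; apply: bellman_shift => s'; rewrite -lerBlDl /gap.
rewrite (bigD1 s') //= lerDl; apply: sumr_ge0 => s'' _.
by rewrite subr_ge0 vi_le_W.
Unshelve. all: by end_near.
Qed.

Lemma W_fixed s : bellman W s = W s.
Proof. by apply/le_anti; rewrite bellman_le_W W_le_bellman. Qed.

Lemma W_le_admissible Ks t s :
  (forall t, kernel_in D beta Po (Ks t)) -> W s <= u s + gamma * ip (Ks t s (pi s)) W.
Proof.
move=> Ks_in; rewrite -[W s]W_fixed /bellman lerD2l ler_wpM2l //.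
exact: worst_min (Ks_in t s (pi s)).
Qed.

Lemma W_le_return Ks s0 :
  (forall t, kernel_in D beta Po (Ks t)) -> W s0 <= disc_return gamma Ks pi u0 s0.
Proof.
move=> Ks_in; have Ks_dist := admissible_dist Ks_in.
have d_dist := state_dist_dist pi s0 Ks_dist.
rewrite disc_returnE; apply: (@ler_limn_geometric_tail _ _ gamma (supnorm W)) => //.
  exact: partial_return_cvg.
move=> n; apply: (@le_trans _ _ (partial_return gamma Ks pi u s0 n
                                 + gamma ^+ n * ip (state_dist Ks pi s0 n) W)).
  rewrite -subr_ge0 partial_return_telescope; apply: sumr_ge0 => t _.
  rewrite mulr_ge0 ?exprn_ge0 // ip_ge0 //; first exact: (d_dist t).1.
  by move=> s; rewrite subr_ge0 W_le_admissible.
by rewrite lerD2l ler_wpM2l ?exprn_ge0 // ip_dist_le_supnorm.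
Qed.

(* Along the stationary minimising kernel the telescoped sum vanishes term by term. *)
Lemma worst_return_le_W s0 :
  disc_return gamma (fun=> fun s a => worst s a W) pi u0 s0 <= W s0.
Proof.
set Kw := fun=> _.
have Kw_dist : forall t s a, is_dist (Kw t s a) by move=> t s a; exact: worst_dist.
rewrite disc_returnE; apply: limr_le; first exact: partial_return_cvg.
apply: nearW => n; have := partial_return_telescope gamma Kw pi u s0 W n.
rewrite big1 => [/eqP|t _]; last first.
  suff -> : (fun s => u s + gamma * ip (Kw t s (pi s)) W - W s) = fun=> 0.
    by rewrite ip0 mulr0.
  by apply/funext => s; have := W_fixed s; rewrite /bellman /Kw /= => ->; rewrite subrr.
rewrite subr_eq0 => /eqP <-; rewrite lerDl mulr_ge0 ?exprn_ge0 // ip_ge0 //.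
  exact: (state_dist_dist pi s0 Kw_dist n).1.
exact: W_ge0.
Qed.

Lemma robust_value_W : robust_value D beta Po gamma pi u0 = W.
Proof.
have worst_kernel_in : forall t : nat, kernel_in D beta Po (fun s a => worst s a W).
  by move=> t s a; exact: worst_in.
apply/funext => s0; apply: inf_attained.
  exists (fun=> fun s a => worst s a W) => //.
  by apply/le_anti; rewrite worst_return_le_W W_le_return.
by move=> _ [Ks Ks_in <-]; exact: W_le_return.
Qed.

Lemma robust_value_bellman_worst s :
  robust_value D beta Po gamma pi u0 s =
  u0 s (pi s) + gamma * ip (worst s (pi s) (robust_value D beta Po gamma pi u0))
                          (robust_value D beta Po gamma pi u0).
Proof. by rewrite robust_value_W; exact/esym/W_fixed. Qed.

End RobustBellman.

Lemma min_dev_attained (R : realType) (S A : finType) D beta Po (s : S) (a : A)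
    (w p : S -> R) :
  unc_set D beta Po s a p -> (forall q, unc_set D beta Po s a q -> ip p w <= ip q w) ->
  min_dev D beta Po s a w = ip p w - ip (Po s a) w.
Proof.
move=> p_in p_min; apply: inf_attained; first by exists p => //; rewrite ipBl.
by move=> _ [q q_in <-]; rewrite ipBl lerD2r p_min.
Qed.

Lemma robust_value_bellman (R : realType) (S A : finType) D beta
    (Po : S -> A -> S -> R) (gamma : R) (pi : S -> A) (u0 : S -> A -> R) :
  0 <= gamma -> gamma < 1 ->
  (forall s a (w : S -> R), exists2 p, unc_set D beta Po s a p &
     forall q, unc_set D beta Po s a q -> ip p w <= ip q w) ->
  (forall s a, 0 <= u0 s a) ->
  forall s, robust_value D beta Po gamma pi u0 s =
    u0 s (pi s) + gamma * ip (Po s (pi s)) (robust_value D beta Po gamma pi u0)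
    + gamma * min_dev D beta Po s (pi s) (robust_value D beta Po gamma pi u0).
Proof.
move=> gamma_ge0 gamma_lt1 minP u0_ge0 s.
have /choice[worst worstP] : forall x : S * A * (S -> R), exists p,
    unc_set D beta Po x.1.1 x.1.2 p /\
    forall q, unc_set D beta Po x.1.1 x.1.2 q -> ip p x.2 <= ip q x.2.
  by move=> [[s' a] w]; have [p p_in p_min] := minP s' a w; exists p.
pose worst' s a w := worst (s, a, w).
have worst_in s' a w : unc_set D beta Po s' a (worst' s' a w) by case: (worstP (s', a, w)).
have worst_min s' a w : forall q, unc_set D beta Po s' a q -> ip (worst' s' a w) w <= ip q w.
  by case: (worstP (s', a, w)).
rewrite (min_dev_attained (worst_in _ _ _) (@worst_min _ _ _)).
rewrite {1}(robust_value_bellman_worst pi gamma_ge0 gamma_lt1 u0_ge0 worst_in worst_min); ring.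
Qed.

Lemma T1opE (R : realType) (S A : finType) D beta (Po : S -> A -> S -> R) (gamma : R)
    m r g lam h pi (v : S -> R) s :
  T1op D beta Po gamma (m := m) r g lam h pi v s =
  T1op D beta Po gamma r g lam h pi (fun=> 0) s + gamma * (1 - h) * ip (Po s (pi s)) v.
Proof. by rewrite /T1op /Top !(ipD, ipN) ip0; ring. Qed.

Lemma T1op_robust_value_fixed (R : realType) (S A : finType) D beta
    (Po : S -> A -> S -> R) (gamma : R) m r (g : 'I_m -> S -> A -> R) lam h pi :
  0 <= gamma -> gamma < 1 ->
  (forall s a (w : S -> R), exists2 p, unc_set D beta Po s a p &
     forall q, unc_set D beta Po s a q -> ip p w <= ip q w) ->
  (forall s a, 0 <= r s a) -> (forall i s a, 0 <= g i s a) ->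
  let V s := robust_value D beta Po gamma pi r s
             - \sum_(i < m) lam i * robust_value D beta Po gamma pi (g i) s in
  forall s, T1op D beta Po gamma r g lam h pi V s = V s.
Proof.
move=> gamma_ge0 gamma_lt1 minP r_ge0 g_ge0 V s.
rewrite /T1op.
have -> : (fun s' => V s' - robust_value D beta Po gamma pi r s'
    + \sum_(i < m) lam i * robust_value D beta Po gamma pi (g i) s') = fun=> 0.
  by apply/funext => s'; rewrite /V; ring.
rewrite ip0 mulr0 subr0 /Top /V ipB ip_lincomb.
set Vg := fun i => robust_value D beta Po gamma pi (g i).
have Vg_bellman i := robust_value_bellman pi gamma_ge0 gamma_lt1 minP (g_ge0 i) s.
have sum_Vg_bellman : \sum_(i < m) lam i * Vg i s =
    \sum_(i < m) lam i * g i s (pi s)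
    + gamma * \sum_(i < m) lam i * ip (Po s (pi s)) (Vg i)
    + gamma * \sum_(i < m) lam i * min_dev D beta Po s (pi s) (Vg i).
  rewrite !mulr_sumr -!big_split /=; apply: eq_bigr => i _.
  by rewrite /Vg Vg_bellman; ring.
rewrite sum_Vg_bellman (robust_value_bellman pi gamma_ge0 gamma_lt1 minP r_ge0 s).
ring.
Qed.

Section AffineStochasticOperator.
Variables (R : realType) (S : finType) (F : (S -> R) -> S -> R).
Variables (c : R) (P : S -> S -> R).
Hypotheses (c_ge0 : 0 <= c) (P_dist : forall s, is_dist (P s)).
Hypothesis FE : forall v s, F v s = F (fun=> 0) s + c * ip (P s) v.

Lemma affine_homo v1 v2 : (forall s, v2 s <= v1 s) -> forall s, F v2 s <= F v1 s.
Proof.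
move=> le_v s; rewrite FE [F v1 s]FE lerD2l ler_wpM2l //.
exact: ler_ip (P_dist s).1 le_v.
Qed.

Lemma affine_shift v d s : F (fun s' => v s' + d) s = F v s + c * d.
Proof. by rewrite FE [F v s]FE ipD (ip_cst d (P_dist s)); ring. Qed.

Lemma affine_contraction v1 v2 :
  supnorm (fun s => F v1 s - F v2 s) <= c * supnorm (fun s => v1 s - v2 s).
Proof.
apply: bigmax_le => [|s _]; first by rewrite mulr_ge0 ?supnorm_ge0.
have -> : F v1 s - F v2 s = c * ip (P s) (fun s' => v1 s' - v2 s').
  by rewrite FE [F v2 s]FE ipB; ring.
by rewrite normrM ger0_norm // ler_wpM2l // norm_ip_dist_le.
Qed.

End AffineStochasticOperator.

Lemma contraction_fixed_unique (R : realType) (S : finType) (F : (S -> R) -> S -> R) c :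
  c < 1 ->
  (forall v1 v2, supnorm (fun s => F v1 s - F v2 s) <= c * supnorm (fun s => v1 s - v2 s)) ->
  forall v w, (forall s, F v s = v s) -> (forall s, F w s = w s) -> forall s, v s = w s.
Proof.
move=> c_lt1 F_contr v w Fv Fw s.
have := F_contr v w; under eq_fun do rewrite Fv Fw.
have := supnorm_ge0 (fun s => v s - w s).
set N := supnorm _ => N_ge0 N_le.
have N_le0 : N <= 0 by nra.
apply/eqP; rewrite -subr_eq0 -normr_le0.
exact: le_trans (ler_norm_supnorm (fun s => v s - w s) s) N_le0.
Qed.

Theorem proposition6 (R : realType) (S A : finType) (gamma : R)
  (Po : S -> A -> S -> R) (D : (S -> R) -> (S -> R) -> R) (beta : S -> A -> R)
  (Rbar : R) (r : S -> A -> R) (m : nat) (tau : 'I_m -> R)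
  (g : 'I_m -> S -> A -> R) (lam : 'I_m -> R) (h : R) :
  0 <= gamma -> gamma < 1 ->
  (forall s a, is_dist (Po s a)) ->
  (* minima over the uncertainty sets are attained *)
  (forall s a (w : S -> R), exists2 p, unc_set D beta Po s a p &
     forall q, unc_set D beta Po s a q -> ip p w <= ip q w) ->
  (forall s a, 0 <= r s a <= Rbar) ->
  (forall i s a, 0 <= g i s a <= tau i) ->
  (forall i, 0 <= lam i) ->
  0 <= h -> h < 1 ->
  forall pi : S -> A,
  let T1 := T1op D beta Po gamma r g lam h pi in
  let Vstar := fun s => robust_value D beta Po gamma pi r s
      - \sum_(i < m) lam i * robust_value D beta Po gamma pi (g i) s in
  (* (1) monotonicity *)
  (forall v1 v2 : S -> R, (forall s, v2 s <= v1 s) ->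
     forall s, T1 v2 s <= T1 v1 s) /\
  (* (2) translation invariance *)
  (forall (v : S -> R) (c : R) s,
     T1 (fun s' => v s' + c) s = T1 v s + gamma * (1 - h) * c) /\
  (* (3) contraction with modulus gamma (1 - h), unique fixed point Vstar *)
  (forall v1 v2 : S -> R,
     supnorm (fun s => T1 v1 s - T1 v2 s)
       <= gamma * (1 - h) * supnorm (fun s => v1 s - v2 s)) /\
  (forall s, T1 Vstar s = Vstar s) /\
  (forall w : S -> R, (forall s, T1 w s = w s) -> forall s, w s = Vstar s).
Proof.
(* [lam] need not be nonnegative: everything is affine in [lam]. *)
move=> gamma_ge0 gamma_lt1 Po_dist minP r_bnd g_bnd _ h_ge0 h_lt1 pi T1 Vstar.
have Po_pi_dist s : is_dist (Po s (pi s)) by exact: Po_dist.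
have c_ge0 : 0 <= gamma * (1 - h) by rewrite mulr_ge0 // subr_ge0 ltW.
have c_lt1 : gamma * (1 - h) < 1 by nra.
have T1E := @T1opE _ _ _ D beta Po gamma m r g lam h pi.
have T1_contr := affine_contraction c_ge0 Po_pi_dist T1E.
have Vstar_fixed : forall s, T1 Vstar s = Vstar s.
  apply: T1op_robust_value_fixed => // [s a|i s a].
    by case/andP: (r_bnd s a).
  by case/andP: (g_bnd i s a).
split; first exact: affine_homo c_ge0 Po_pi_dist T1E.
split; first exact: affine_shift Po_pi_dist T1E.
do 2!split => //.
by move=> w w_fixed; exact: contraction_fixed_unique c_lt1 T1_contr w Vstar w_fixed Vstar_fixed.
Qed.
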